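(* Let $D$ be a positive integer that is not a perfect square, and let $L_j$ ($j\in\mathbb{Z}$) be the simple equivalence matrices of the principal cycle of determinant $D$. Then: (i) For $j>0$ the entries of $L_j$ have the (weak) sign patterns $\begin{pmatrix}+&+\\+&+\end{pmatrix}$, $\begin{pmatrix}-&+\\-&+\end{pmatrix}$, $\begin{pmatrix}-&-\\-&-\end{pmatrix}$, $\begin{pmatrix}+&-\\+&-\end{pmatrix}$ according as $j\equiv0,1,2,3\pmod 4$, where $+$ means the entry is $\ge0$ and $-$ means it is $\le0$. (ii) For $j>0$, $|L_j|=|S^{(1)}|\cdots|S^{(j)}|$ and $|L_{-j}|=|S^{(-j)}|\cdots|S^{(-1)}|$. (iii) For every integer $j$ with $|j|\ge2$, writing $L_j=(l_{ik})$, we have $1\le \dfrac{\max_{i,k}|l_{ik}|}{\min_{i,k}|l_{ik}|}\le 4(D+\sqrt D)$.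
   Context: Forms: $Q=[a,2b,c]$ means $ax_1^2+2bx_1x_2+cx_2^2$ ($a,b,c\in\mathbb{Z}$), with matrix $\begin{pmatrix} a&b\\ b&c\end{pmatrix}$ and determinant $b^2-ac$. A form of determinant $D$ is reduced if $0<b<\sqrt D$ and $\sqrt D-b<|a|<\sqrt D+b$. The reduced identity form is $\tilde I=[1,2\lambda,\lambda^2-D]$, $\lambda=\lfloor\sqrt D\rfloor$. For a reduced form $Q_1=[a_1,2b_1,c_1]$, let $S=\begin{pmatrix}0&1\\-1&\mu\end{pmatrix}$ where $\mu$ is the integer with $-\sqrt D-b_1<\mu c_1<-\sqrt D-b_1+|c_1|$; the right neighbor of $Q_1$ is the reduced form $S^tQ_1S$. Put $Q^{(0)}=\tilde I$, let $Q^{(j)}$ be the right neighbor of $Q^{(j-1)}$ and $S^{(j)}$ the matrix $S$ taking $Q^{(j-1)}$ to $Q^{(j)}$ ($j\ge1$). The sequence $Q^{(j)}$ is periodic with least period $2p$. For $j\ge1$, $L_j=S^{(1)}\cdots S^{(j)}$, and $L_0$ is the identity. For negative $j$, $S^{(j)}=(S^{(j_0)})^{-1}$ where $j\equiv j_0\pmod{2p}$, $0<j_0\le 2p$, and for $j>0$, $L_{-j}=S^{(-j)}\cdots S^{(-1)}$. For a matrix $M=(m_{ik})$, $|M|=(|m_{ik}|)$ denotes the entrywise absolute value. *)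

From HB Require Import structures.
From mathcomp Require Import all_boot all_order all_algebra.
From mathcomp Require Import Rstruct.
Set Implicit Arguments. Unset Strict Implicit. Unset Printing Implicit Defensive.
Import Order.TTheory GRing.Theory Num.Theory.
Local Open Scope ring_scope.

Definition sqrtD (D : nat) : Rdefinitions.R := Num.sqrt (D%:R : Rdefinitions.R).

Definition lam (D : nat) : int := Num.floor (sqrtD D).

(* A binary form [a,2b,c] is represented by its matrix ((a,b),(b,c)). *)
Definition form_of (a b c : int) : 'M[int]_2 :=
  \matrix_(i < 2, k < 2)
    (if (i == 0) && (k == 0) then a else if (i == 1) && (k == 1) then c else b).

Definition Itilde (D : nat) : 'M[int]_2 :=
  form_of 1 (lam D) (lam D ^+ 2 - D%:Z).

Definition Smat (mu : int) : 'M[int]_2 :=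
  \matrix_(i < 2, k < 2)
    (if (i == 0) && (k == 0) then 0 else if (i == 0) then 1
     else if (k == 0) then -1 else mu).

Definition mu_cond (D : nat) (Q1 : 'M[int]_2) (mu : int) : Prop :=
  let b1 : Rdefinitions.R := (Q1 0 1)%:~R in
  let c1 : Rdefinitions.R := (Q1 1 1)%:~R in
  - sqrtD D - b1 < mu%:~R * c1 /\ mu%:~R * c1 < - sqrtD D - b1 + `|c1|.

(* (Q, mu) describe the principal cycle: Q 0 = Itilde, and Q j is the right
   neighbour of Q (j-1), obtained with S^(j) = Smat (mu j), for j >= 1. *)
Definition principal_cycle (D : nat) (Q : nat -> 'M[int]_2) (mu : nat -> int)
  : Prop :=
  Q 0%N = Itilde D /\
  forall j : nat, (0 < j)%N ->
    mu_cond D (Q j.-1) (mu j) /\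
    Q j = (Smat (mu j))^T *m Q j.-1 *m Smat (mu j).

Definition least_period (Q : nat -> 'M[int]_2) (N : nat) : Prop :=
  (0 < N)%N /\ (forall j, Q (j + N)%N = Q j) /\
  (forall M, (0 < M)%N -> (forall j, Q (j + M)%N = Q j) -> (N <= M)%N).

(* S^(j) for j in Z (j <> 0): for j > 0 it is Smat (mu j); for j <= 0 it is
   the inverse of S^(j0), j0 = j mod N with 0 < j0 <= N. *)
Definition Sz (mu : nat -> int) (N : nat) (j : int) : 'M[int]_2 :=
  if 0 < j then Smat (mu (absz j))
  else invmx (Smat (mu (absz (((j - 1) %% N%:Z)%Z + 1)))).

Definition Lz (mu : nat -> int) (N : nat) (j : int) : 'M[int]_2 :=
  if 0 < j then \prod_(i <- iota 1 (absz j)) Sz mu N i%:Z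
  else if j == 0 then 1
  else \prod_(i <- rev (iota 1 (absz j))) Sz mu N (- i%:Z).

Definition absmx (M : 'M[int]_2) : 'M[int]_2 := map_mx (fun x => `|x|) M.

Definition maxabs (M : 'M[int]_2) : int :=
  Num.max (Num.max `|M 0 0| `|M 0 1|) (Num.max `|M 1 0| `|M 1 1|).
Definition minabs (M : 'M[int]_2) : int :=
  Num.min (Num.min `|M 0 0| `|M 0 1|) (Num.min `|M 1 0| `|M 1 1|).

From HB Require Import structures.
From mathcomp Require Import all_boot all_order all_algebra.
From mathcomp Require Import Rstruct.
From mathcomp Require Import lra zify ring.
Import Order.TTheory GRing.Theory Num.Theory.
Set Implicit Arguments. Unset Strict Implicit. Unset Printing Implicit Defensive.
Local Open Scope ring_scope.

(* Along the principal cycle every form is reduced and its first coefficient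
   changes sign at each step, since ac < 0 for a reduced form [a, 2b, c] and
   its right neighbour starts with c. Hence the partial quotients alternate,
   (-1)^(k-1) mu_k > 0, with 1 <= |mu_k| <= 2 lambda, and the period is even.
   A diagonal sign matrix passes through S(mu) at the cost of rotating its
   diagonal: diag(a, b) S(mu) = |S(mu)| diag(-b, a) when mu has the sign of
   ab. So L_j = |S^(1)| ... |S^(j)| diag(e_j, d_j) with (e_j, d_j) of period
   4, which gives (i) and (ii) for j > 0. For j < 0, S(mu)^-1 = J S(mu)^T J^T
   with J = S(0), so L_(-j) is the J-conjugate of the transpose of a positive
   product, over partial quotients that still alternate because the period
   is even. Finally, in a product of at least two matrices
   |S(mu)| = [[0,1],[1,|mu|]] the entries grow from the top-left to the
   bottom-right corner by a factor at most K = 2 lambda + 1 per step, so the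
   ratio is at most K^2 <= 4 (D + sqrt D). *)

Lemma ord2_cases (i : 'I_2) : i = 0 \/ i = 1.
Proof. by case: i => [[|[|//]] ?]; [left | right]; apply: val_inj. Qed.

Lemma mx2_ext (T : Type) (A B : 'M[T]_2) :
  A 0 0 = B 0 0 -> A 0 1 = B 0 1 -> A 1 0 = B 1 0 -> A 1 1 = B 1 1 -> A = B.
Proof.
move=> e00 e01 e10 e11; apply/matrixP => i k.
by case: (ord2_cases i) => ->; case: (ord2_cases k) => ->.
Qed.

Lemma mulmx2E (A B : 'M[int]_2) i k :
  (A *m B) i k = A i 0 * B 0 k + A i 1 * B 1 k.
Proof.
rewrite mxE !big_ord_recl big_ord0 addr0.
by congr (_ * _ + _ * _); congr (_ _ _); apply: val_inj.
Qed.

Lemma SmatE m :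
  [/\ Smat m 0 0 = 0, Smat m 0 1 = 1, Smat m 1 0 = -1 & Smat m 1 1 = m].
Proof. by rewrite !mxE. Qed.

Lemma absmx_SmatE m : [/\ absmx (Smat m) 0 0 = 0, absmx (Smat m) 0 1 = 1,
  absmx (Smat m) 1 0 = 1 & absmx (Smat m) 1 1 = `|m|].
Proof. by rewrite !mxE /= ?normr0 ?normrN ?normr1. Qed.

Lemma form_ofE a b c : [/\ form_of a b c 0 0 = a, form_of a b c 0 1 = b,
  form_of a b c 1 0 = b & form_of a b c 1 1 = c].
Proof. by rewrite !mxE. Qed.

Definition nonneg_mx (R : numDomainType) m n (M : 'M[R]_(m, n)) : Prop :=
  forall i k, 0 <= M i k.

Lemma nonneg_mx_prod (R : numDomainType) n I (s : seq I) (F : I -> 'M[R]_n) :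
  (forall i, nonneg_mx (F i)) -> nonneg_mx (\prod_(i <- s) F i).
Proof.
move=> F_ge0; apply: (big_ind (@nonneg_mx R n n)).
- by move=> i k; rewrite mxE; case: (i == k).
- move=> A B A_ge0 B_ge0 i k; rewrite mxE.
  by apply: sumr_ge0 => l _; apply: mulr_ge0.
- by move=> i _; apply: F_ge0.
Qed.

Lemma nonneg_absmx M : nonneg_mx (absmx M).
Proof. by move=> i k; rewrite mxE. Qed.

Lemma big_rev_conj_trmx (R : comNzRingType) n I (s : seq I) (X : 'M[R]_n)
    (F : I -> 'M[R]_n) :
  X *m X^T = 1%:M -> X^T *m X = 1%:M ->
  \prod_(i <- rev s) (X *m (F i)^T *m X^T) = X *m (\prod_(i <- s) F i)^T *m X^T.
Proof.
move=> XXt XtX; elim: s => [|i s IH]; first by rewrite !big_nil trmx1 mulmx1 XXt.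
rewrite rev_cons -cats1 big_cat big_seq1 big_cons /= IH -!mulmxE trmx_mul.
by rewrite !mulmxA -(mulmxA _ X^T) XtX mulmx1.
Qed.

Lemma iota1S j : iota 1 j.+1 = iota 1 j ++ [:: j.+1].
Proof. by rewrite -(addn1 j) iotaD add1n addn1. Qed.

Section SqrtD.
Variable D : nat.

Lemma sqrtD_ge0 : 0 <= sqrtD D.
Proof. exact: sqrtr_ge0. Qed.

Lemma sqr_sqrtD : sqrtD D ^+ 2 = D%:R.
Proof. by rewrite sqr_sqrtr ?ler0n. Qed.

Lemma lam_le_sqrtD : (lam D)%:~R <= sqrtD D.
Proof. exact: floor_le. Qed.

Lemma sqrtD_lt_lamD1 : sqrtD D < (lam D + 1)%:~R.
Proof. exact: floorD1_gt. Qed.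

Lemma int_lt_sqrtD (x : int) : x%:~R < sqrtD D -> x <= lam D.
Proof. by move=> /ltW; rewrite /lam floor_ge_int. Qed.

Hypothesis D_nsq : forall m : nat, (m ^ 2)%N != D.

Lemma lam_lt_sqrtD : (lam D)%:~R < sqrtD D.
Proof.
rewrite lt_neqAle lam_le_sqrtD andbT; apply/eqP => lamE.
have /eqP : (lam D ^+ 2)%:~R = (D%:Z)%:~R :> Rdefinitions.R.
  by rewrite rmorphXn /= lamE sqr_sqrtD.
rewrite eqr_int => /eqP lam2E.
by move/eqP: (D_nsq `|lam D|%N); apply; move: lam2E; rewrite expr2 expnS expn1; nia.
Qed.

Lemma lam_sqr_lt : lam D ^+ 2 < D%:Z.
Proof.
rewrite -(ltr_int Rdefinitions.R) rmorphXn /= -[X in _ < X]/(D%:R) -sqr_sqrtD.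
by rewrite ltr_pXn2r // ?nnegrE ?sqrtD_ge0 ?lam_lt_sqrtD // ler0z floor_ge0 sqrtD_ge0.
Qed.

Lemma sqr_2lam1_le :
  ((2 * lam D + 1) ^+ 2)%:~R <= 4 * (D%:R + sqrtD D) :> Rdefinitions.R.
Proof.
have lam2 : (lam D ^+ 2 + 1)%:~R <= (D%:Z)%:~R :> Rdefinitions.R.
  by rewrite ler_int; have := lam_sqr_lt; lia.
have := lam_le_sqrtD; move: lam2.
rewrite -[(D%:Z)%:~R]/(D%:R) !rmorphXn !rmorphD !rmorphM /= !rmorph1.
have -> : 2%:~R = 2 :> Rdefinitions.R by [].
nra.
Qed.

Hypothesis D_gt0 : (0 < D)%N.

Lemma lam_ge1 : 1 <= lam D.
Proof.
have D_ge1 : 1 <= D%:R :> Rdefinitions.R by rewrite ler1n.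
by rewrite /lam floor_ge_int; move: (ler_wsqrtr D_ge1); rewrite sqrtr1.
Qed.

End SqrtD.

Definition is_reduced (R : realDomainType) (s a b : R) : bool :=
  [&& 0 < b, b < s, s - b < `|a| & `|a| < s + b].

Lemma is_reduced_neighbour (R : realDomainType) (s a b c : R) (m : int) :
  is_reduced s a b -> b ^+ 2 - a * c = s ^+ 2 ->
  - s - b < m%:~R * c < - s - b + `|c| ->
  is_reduced s c (- b - m%:~R * c).
Proof.
case/and4P=> b_gt0 b_lt_s a_lb a_ub detE /andP[mc_lb mc_ub].
have ac_lt0 : a * c < 0 by nra.
have normac : `|a| * `|c| = s ^+ 2 - b ^+ 2 by rewrite -normrM ltr0_norm //; lra.
have c_ub : `|c| < s + b by nra.
have [c_le_s | s_lt_c] := lerP `|c| s; first by apply/and4P; split; lra.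
(* Now -|c| is the only multiple of c in the window for m c. *)
have mcE : m%:~R * c = - `|c|.
  have mc_lt0 : m%:~R * c < 0 by lra.
  have m_ne0 : m != 0 by apply: contraTneq mc_lt0 => ->; rewrite mul0r ltxx.
  have mcN : m%:~R * c = - (`|m|%:~R * `|c|).
    by rewrite intr_norm -normrM ltr0_norm // opprK.
  have [m1 | m_ge2] : `|m| = 1 \/ 2 <= `|m| by lia.
    by rewrite mcN m1 mul1r.
  have : 2%:~R <= `|m|%:~R :> R by rewrite ler_int.
  nra.
by apply/and4P; rewrite mcE; split; lra.
Qed.

Definition reduced_form (D : nat) (M : 'M[int]_2) : Prop :=
  [/\ M 1 0 = M 0 1, M 0 1 ^+ 2 - M 0 0 * M 1 1 = D%:Z
    & is_reduced (sqrtD D) (M 0 0)%:~R (M 0 1)%:~R].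

Lemma right_neighbourE (M : 'M[int]_2) m :
  let M' := (Smat m)^T *m M *m Smat m in
  [/\ M' 0 0 = M 1 1, M' 0 1 = - M 1 0 - m * M 1 1,
      M' 1 0 = - M 0 1 - m * M 1 1
    & M' 1 1 = M 0 0 + m * (M 0 1 + M 1 0) + m ^+ 2 * M 1 1].
Proof.
have [s00 s01 s10 s11] := SmatE m.
by rewrite /= !mulmx2E ![(Smat m)^T _ _]mxE s00 s01 s10 s11; split; ring.
Qed.

Section ReducedForm.
Variables (D : nat) (M : 'M[int]_2).
Hypothesis M_red : reduced_form D M.

Lemma reduced_form_corner_lt0 : M 0 0 * M 1 1 < 0.
Proof.
case: M_red => _ detE /and4P[b_gt0 b_lt_s _ _].
suff : M 0 1 ^+ 2 < D%:Z by lia.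
rewrite -(ltr_int Rdefinitions.R) rmorphXn /= -[X in _ < X]/(D%:R) -sqr_sqrtD.
by rewrite ltr_pXn2r // nnegrE ?sqrtD_ge0 // ltW.
Qed.

Variable m : int.
Hypothesis M_mu : mu_cond D M m.

Lemma reduced_form_neighbour : reduced_form D ((Smat m)^T *m M *m Smat m).
Proof.
case: M_red => symM detE redM.
have [e00 e01 e10 e11] := right_neighbourE M m.
rewrite /reduced_form e00 e01 e10 e11 symM.
split => //; first by rewrite -detE; ring.
rewrite rmorphB rmorphN rmorphM /=.
apply: (is_reduced_neighbour (a := (M 0 0)%:~R)) => //.
  by rewrite sqr_sqrtD -[D%:R]/((D%:Z)%:~R) -detE rmorphB rmorphXn rmorphM.
by case: M_mu => *; apply/andP.
Qed.

Lemma mu_cond_mul_lt0 : m * M 1 1 < 0.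
Proof.
case: reduced_form_neighbour => _ _ /and4P[b'_gt0 _ _ _].
have [_ e01 _ _] := right_neighbourE M m.
case: M_red => symM _ /and4P[b_gt0 _ _ _].
by move: b'_gt0 b_gt0; rewrite e01 symM !ltr0z; lia.
Qed.

Lemma mu_cond_abs_le : `|m| <= 2 * lam D.
Proof.
case: reduced_form_neighbour => _ _ /and4P[_ b'_lt_s _ _].
have [_ e01 _ _] := right_neighbourE M m.
case: M_red => symM _ /and4P[_ b_lt_s _ _].
(* -m c = b + b' with b, b' < sqrt D, and |c| >= 1 *)
move: b'_lt_s; rewrite e01 symM => /int_lt_sqrtD b'_le.
have b_le := int_lt_sqrtD b_lt_s.
have mc_lt0 := mu_cond_mul_lt0.
have c_ne0 : M 1 1 != 0 by apply: contraTneq mc_lt0 => ->; rewrite mulr0 ltxx.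
have m_le : `|m| <= `|m * M 1 1| by rewrite normrM ler_peMr //; lia.
by move: m_le; rewrite [`|m * _|]ltr0_norm //; lia.
Qed.

End ReducedForm.

Lemma Itilde00 D : Itilde D 0 0 = 1.
Proof. by rewrite mxE. Qed.

Lemma reduced_Itilde D : (0 < D)%N -> (forall m : nat, (m ^ 2)%N != D) ->
  reduced_form D (Itilde D).
Proof.
move=> D_gt0 D_nsq.
have [e00 e01 e10 e11] := form_ofE 1 (lam D) (lam D ^+ 2 - D%:Z).
rewrite /reduced_form /Itilde e00 e01 e10 e11; split => //; first by ring.
have lam_ge1 : 1 <= (lam D)%:~R :> Rdefinitions.R by rewrite ler1z lam_ge1.
have := lam_lt_sqrtD D_nsq; have := sqrtD_lt_lamD1 D; rewrite rmorphD /= !rmorph1.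
by move=> *; apply/and4P; rewrite normr1; split; lra.
Qed.

Definition alternating (g : nat -> int) : Prop :=
  forall k, (0 < k)%N -> g k = (-1) ^+ k.-1 * `|g k|.

Section PrincipalCycle.
Variables (D : nat) (Q : nat -> 'M[int]_2) (mu : nat -> int).
Hypotheses (D_gt0 : (0 < D)%N) (D_nsq : forall m : nat, (m ^ 2)%N != D).
Hypothesis Q_mu : principal_cycle D Q mu.

Lemma principal_cycle_reduced j :
  reduced_form D (Q j) /\ 0 < (-1) ^+ j * Q j 0 0.
Proof.
case: Q_mu => Q0 QS; elim: j => [|j [Qj_red Qj_sgn]].
  by rewrite Q0 Itilde00 mulr1; split => //; apply: reduced_Itilde.
have [mu_j ->] := QS j.+1 isT; split; first exact: reduced_form_neighbour.
have [-> _ _ _] := right_neighbourE (Q j) (mu j.+1).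
have := reduced_form_corner_lt0 Qj_red.
by move: Qj_sgn; rewrite exprS -signr_odd; case: (odd j) => /=; nia.
Qed.

Lemma principal_mu_alternating : alternating mu.
Proof.
case=> // j _ /=; have [Qj_red Qj_sgn] := principal_cycle_reduced j.
have [mu_j _] := (proj2 Q_mu) j.+1 isT.
have := reduced_form_corner_lt0 Qj_red; have := mu_cond_mul_lt0 Qj_red mu_j.
by move: Qj_sgn; rewrite -signr_odd; case: (odd j) => /=; nia.
Qed.

Lemma principal_mu_bound k : (0 < k)%N -> 1 <= `|mu k| <= 2 * lam D.
Proof.
case: k => // j _; have [Qj_red _] := principal_cycle_reduced j.
have [mu_j _] := (proj2 Q_mu) j.+1 isT.
rewrite (mu_cond_abs_le Qj_red mu_j) andbT.
have mc_lt0 := mu_cond_mul_lt0 Qj_red mu_j.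
have : mu j.+1 != 0 by apply: contraTneq mc_lt0 => ->; rewrite mul0r ltxx.
lia.
Qed.

Lemma least_period_even N : least_period Q N -> ~~ odd N.
Proof.
case=> _ [QN _]; have [_ sgnN] := principal_cycle_reduced N.
move: sgnN; rewrite -[N]add0n QN (proj1 Q_mu) Itilde00 mulr1 add0n -signr_odd.
by case: (odd N).
Qed.

End PrincipalCycle.

Definition Sprod (g : nat -> int) (j : nat) : 'M[int]_2 :=
  \prod_(i <- iota 1 j) Smat (g i).

Definition absSprod (g : nat -> int) (j : nat) : 'M[int]_2 :=
  \prod_(i <- iota 1 j) absmx (Smat (g i)).

Definition rot_sign (p : int * int) : int * int := (- p.2, p.1).

Definition sign_pair (j : nat) : int * int := iter j rot_sign (1, 1).

Definition diag2 (p : int * int) : 'M[int]_2 := form_of p.1 0 p.2.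

Lemma sign_pair_norm j : `|(sign_pair j).1| = 1 /\ `|(sign_pair j).2| = 1.
Proof. by elim: j => [|j [n1 n2]] //; rewrite /sign_pair iterS /= normrN. Qed.

Lemma sign_pair_mul j : (sign_pair j).1 * (sign_pair j).2 = (-1) ^+ j.
Proof.
elim: j => [|j IH] //; rewrite /sign_pair iterS /= -/(sign_pair j) exprS -IH.
by rewrite mulN1r mulNr mulrC.
Qed.

Lemma iter_rot_sign_mul4 q p : iter (q * 4) rot_sign p = p.
Proof.
elim: q => [|q IH] //; rewrite mulSn iterD IH.
by rewrite /rot_sign /= !opprK -surjective_pairing.
Qed.

Lemma sign_pair_mod4 j : sign_pair j = sign_pair (j %% 4).
Proof. by rewrite {1}(divn_eq j 4) /sign_pair iterD iter_rot_sign_mul4. Qed.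

Lemma mulmx_diag2E (M : 'M[int]_2) p i :
  (M *m diag2 p) i 0 = M i 0 * p.1 /\ (M *m diag2 p) i 1 = M i 1 * p.2.
Proof.
have [d00 d01 d10 d11] := form_ofE p.1 0 p.2.
by rewrite !mulmx2E /diag2 d00 d01 d10 d11 !mulr0 addr0 add0r.
Qed.

Lemma absmx_mul_diag2 (M : 'M[int]_2) p : nonneg_mx M ->
  `|p.1| = 1 -> `|p.2| = 1 -> absmx (M *m diag2 p) = M.
Proof.
move=> M_ge0 p1 p2.
have [e00 e01] := mulmx_diag2E M p 0; have [e10 e11] := mulmx_diag2E M p 1.
by apply: mx2_ext; rewrite ![absmx _ _ _]mxE ?e00 ?e01 ?e10 ?e11 normrM ?p1 ?p2
  mulr1 ger0_norm.
Qed.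

Lemma diag2_mul_Smat p m : `|p.1| = 1 -> `|p.2| = 1 -> m = p.1 * p.2 * `|m| ->
  diag2 p *m Smat m = absmx (Smat m) *m diag2 (rot_sign p).
Proof.
case: p => a b /= a1 b1 mE.
have [s00 s01 s10 s11] := SmatE m.
have [d00 d01 d10 d11] := form_ofE a 0 b.
have [e00 e01 e10 e11] := form_ofE (- b) 0 a.
have b2 : b * b = 1 by rewrite -expr2 -real_normK ?num_real // b1 expr1n.
apply: mx2_ext; rewrite !mulmx2E ![absmx _ _ _]mxE /diag2 /= ?s00 ?s01 ?s10 ?s11
  ?d00 ?d01 ?d10 ?d11 ?e00 ?e01 ?e10 ?e11 ?normr0 ?normrN ?normr1; try ring.
by rewrite {1}mE; transitivity (b * b * a * `|m|); [ring | rewrite b2; ring].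
Qed.

Section SignPattern.
Variable g : nat -> int.
Hypothesis g_alt : alternating g.

Lemma Sprod_sign j : Sprod g j = absSprod g j *m diag2 (sign_pair j).
Proof.
elim: j => [|j IH].
  by rewrite /Sprod /absSprod !big_nil mul1mx; apply: mx2_ext; rewrite !mxE.
rewrite /Sprod /absSprod iota1S !big_cat !big_seq1 /= -/(Sprod g j).
rewrite -/(absSprod g j) IH -!mulmxE -!mulmxA.
have [n1 n2] := sign_pair_norm j.
by rewrite diag2_mul_Smat // sign_pair_mul [LHS]g_alt.
Qed.

Lemma nonneg_absSprod j : nonneg_mx (absSprod g j).
Proof. by apply: nonneg_mx_prod => i; apply: nonneg_absmx. Qed.

Lemma absmx_Sprod j : absmx (Sprod g j) = absSprod g j.
Proof.
have [n1 n2] := sign_pair_norm j.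
by rewrite Sprod_sign (absmx_mul_diag2 (nonneg_absSprod j)).
Qed.

Lemma Sprod_sign_pattern j :
  let L := Sprod g j in
  ((j %% 4 = 0)%N -> 0 <= L 0 0 /\ 0 <= L 0 1 /\ 0 <= L 1 0 /\ 0 <= L 1 1) /\
  ((j %% 4 = 1)%N -> L 0 0 <= 0 /\ 0 <= L 0 1 /\ L 1 0 <= 0 /\ 0 <= L 1 1) /\
  ((j %% 4 = 2)%N -> L 0 0 <= 0 /\ L 0 1 <= 0 /\ L 1 0 <= 0 /\ L 1 1 <= 0) /\
  ((j %% 4 = 3)%N -> 0 <= L 0 0 /\ L 0 1 <= 0 /\ 0 <= L 1 0 /\ L 1 1 <= 0).
Proof.
rewrite /= Sprod_sign sign_pair_mod4.
move: (absSprod g j) (nonneg_absSprod j) => P P_ge0.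
have := P_ge0 0 0; have := P_ge0 0 1; have := P_ge0 1 0; have := P_ge0 1 1.
move: (j %% 4)%N (ltn_pmod j (isT : 0 < 4)%N) => r r_lt4.
have [e00 e01] := mulmx_diag2E P (sign_pair r) 0.
have [e10 e11] := mulmx_diag2E P (sign_pair r) 1.
rewrite e00 e01 e10 e11.
by case: r r_lt4 {e00 e01 e10 e11} => [|[|[|[|//]]]] _;
  rewrite /sign_pair /rot_sign /=; lia.
Qed.

End SignPattern.

Definition mx_ratio (M : 'M[int]_2) : Rdefinitions.R :=
  (maxabs M)%:~R / (minabs M)%:~R.

Definition growth_bounded (K : int) (M : 'M[int]_2) : Prop :=
  [/\ 1 <= M 0 0, M 0 0 <= M 0 1 <= K * M 0 0, M 0 0 <= M 1 0 <= K * M 0 0,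
      M 0 1 <= M 1 1 <= K * M 0 1 & M 1 0 <= M 1 1].

Lemma growth_bounded_mul K M m : growth_bounded K M -> 1 <= `|m| < K ->
  growth_bounded K (M *m absmx (Smat m)).
Proof.
case=> x_ge1 /andP[xy yx] /andP[xz zx] /andP[yw wy] zw /andP[m_ge1 m_ltK].
have [a00 a01 a10 a11] := absmx_SmatE m.
rewrite /growth_bounded !mulmx2E a00 a01 a10 a11 !mulr0 !mulr1 !add0r.
move: `|m| m_ge1 m_ltK => n n_ge1 n_ltK.
by split; try apply/andP; try split; nia.
Qed.

Lemma growth_bounded_ratio K M : growth_bounded K M ->
  1 <= mx_ratio M <= (K ^+ 2)%:~R.
Proof.
case=> x_ge1 /andP[xy yx] /andP[xz zx] /andP[yw wy] zw.
rewrite /mx_ratio.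
have -> : maxabs M = M 1 1 by rewrite /maxabs; lia.
have -> : minabs M = M 0 0 by rewrite /minabs; lia.
have x_gt0 : 0 < (M 0 0)%:~R :> Rdefinitions.R by rewrite ltr0z; lia.
rewrite ler_pdivlMr // ler_pdivrMr // mul1r -rmorphM /= !ler_int.
by apply/andP; split; nia.
Qed.

Lemma growth_bounded_absSprod (g : nat -> int) (K : int) j :
  (forall k, (0 < k)%N -> 1 <= `|g k| < K) -> growth_bounded K (absSprod g j.+2).
Proof.
move=> g_bound; elim: j => [|j IH].
  have [a00 a01 a10 a11] := absmx_SmatE (g 1%N).
  have [b00 b01 b10 b11] := absmx_SmatE (g 2%N).
  rewrite /absSprod /= !big_cons big_nil mulr1 -mulmxE.
  have /andP[n1 n1K] := g_bound 1%N isT; have /andP[n2 n2K] := g_bound 2%N isT.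
  rewrite /growth_bounded !mulmx2E a00 a01 a10 a11 b00 b01 b10 b11.
  move: `|g 1%N| `|g 2%N| n1 n1K n2 n2K => n1 n2 *.
  by split; try apply/andP; try split; nia.
rewrite /absSprod iota1S big_cat big_seq1 /= -/(absSprod g j.+2) -mulmxE.
exact: growth_bounded_mul (g_bound _ _).
Qed.

Local Notation J := (Smat 0).

Lemma conj_JE (M : 'M[int]_2) : let M' := J *m M^T *m J^T in
  [/\ M' 0 0 = M 1 1, M' 0 1 = - M 0 1, M' 1 0 = - M 1 0 & M' 1 1 = M 0 0].
Proof. by rewrite /= !mulmx2E !mxE /=; split; ring. Qed.

Lemma J_orthogonal : J *m J^T = 1%:M /\ J^T *m J = 1%:M.
Proof.
by split; apply/matrixP => i k; rewrite !mulmx2E !mxE;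
  case: (ord2_cases i) => ->; case: (ord2_cases k) => ->.
Qed.

Lemma absJ_orthogonal :
  absmx J *m (absmx J)^T = 1%:M /\ (absmx J)^T *m absmx J = 1%:M.
Proof.
have [j00 j01 j10 j11] := SmatE 0.
by split; apply: mx2_ext; rewrite !mulmx2E ![_^T _ _]mxE ![absmx _ _ _]mxE
  ?j00 ?j01 ?j10 ?j11 !mxE /= ?normr0 ?normrN ?normr1.
Qed.

Lemma invmx_Smat m : invmx (Smat m) = J *m (Smat m)^T *m J^T.
Proof.
have [s00 s01 s10 s11] := SmatE m; have [j00 j01 j10 j11] := SmatE 0.
have SB : Smat m *m (J *m (Smat m)^T *m J^T) = 1%:M.
  apply: mx2_ext; rewrite !mulmx2E ![_^T _ _]mxE s00 s01 s10 s11 j00 j01 j10 j11;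
  rewrite !mxE /=; ring.
have [S_unit _] := mulmx1_unit SB.
by rewrite -[RHS](mulKmx S_unit) SB mulmx1.
Qed.

Lemma absmx_conjJ (M : 'M[int]_2) :
  absmx (J *m M^T *m J^T) = absmx J *m (absmx M)^T *m (absmx J)^T.
Proof.
have [b00 b01 b10 b11] := conj_JE M; have [j00 j01 j10 j11] := SmatE 0.
apply: mx2_ext; rewrite [LHS]mxE ?b00 ?b01 ?b10 ?b11 !mulmx2E ![_^T _ _]mxE
  ![absmx _ _ _]mxE ?j00 ?j01 ?j10 ?j11 ?normr0 ?normrN ?normr1; ring.
Qed.

Lemma mx_ratio_absmx M : mx_ratio (absmx M) = mx_ratio M.
Proof. by rewrite /mx_ratio /maxabs /minabs !mxE !normr_id. Qed.

Lemma mx_ratio_conjJ M : mx_ratio (J *m M^T *m J^T) = mx_ratio M.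
Proof.
have [b00 b01 b10 b11] := conj_JE M.
rewrite /mx_ratio /maxabs /minabs b00 b01 b10 b11 !normrN.
by congr (_%:~R / _%:~R); lia.
Qed.

(* The index j0 with -i = j0 (mod N) and 0 < j0 <= N, as in the definition of Sz. *)
Definition neg_index (N i : nat) : nat := absz (((- i%:Z - 1) %% N%:Z)%Z + 1).

Lemma neg_index_spec N i : (0 < N)%N -> ~~ odd N ->
  (0 < neg_index N i)%N /\ odd (neg_index N i) = odd i.
Proof.
move=> N_gt0 N_even; rewrite /neg_index.
have N_ne0 : N%:Z != 0 by rewrite eqz_nat -lt0n.
have r_ge0 := modz_ge0 (- i%:Z - 1) N_ne0.
have := divz_eq (- i%:Z - 1) N%:Z.
set r := (_ %% _)%Z in r_ge0 *; set q := (_ %/ _)%Z => E.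
split; first by lia.
have sum : (absz (r + 1)%R + i = absz q * N)%N by nia.
move/(congr1 odd): sum; rewrite oddD oddM (negbTE N_even) andbF.
by case: (odd _); case: (odd i).
Qed.

Lemma alternating_neg_index (g : nat -> int) N : (0 < N)%N -> ~~ odd N -> alternating g ->
  alternating (g \o neg_index N).
Proof.
move=> N_gt0 N_even g_alt k k_gt0 /=.
have [idx_gt0 idx_odd] := neg_index_spec k N_gt0 N_even.
rewrite [LHS]g_alt // -signr_odd -[in RHS]signr_odd; congr (_ ^+ _ * _).
move: idx_gt0 idx_odd; case: (neg_index N k) => // n _; case: k k_gt0 => // k _ /=.
by move/(congr1 negb); rewrite !negbK => ->.
Qed.

Lemma Sz_pos mu N i : (0 < i)%N -> Sz mu N i%:Z = Smat (mu i).
Proof. by move=> i_gt0; rewrite /Sz ltz_nat i_gt0. Qed.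

Lemma Sz_neg mu N i :
  Sz mu N (- i%:Z) = J *m (Smat (mu (neg_index N i)))^T *m J^T.
Proof. by rewrite /Sz oppr_gt0 ltNge le0z_nat /= invmx_Smat. Qed.

Lemma Lz_pos mu N j : (0 < j)%N -> Lz mu N j%:Z = Sprod mu j.
Proof.
move=> j_gt0; rewrite /Lz ltz_nat j_gt0 /=.
by apply: eq_big_seq => i; rewrite mem_iota => /andP[i_gt0 _]; rewrite Sz_pos.
Qed.

Lemma Lz_neg mu N j : (0 < j)%N ->
  Lz mu N (- j%:Z) = J *m (Sprod (mu \o neg_index N) j)^T *m J^T.
Proof.
move=> j_gt0; have [JJt JtJ] := J_orthogonal.
rewrite /Lz oppr_gt0 ltNge le0z_nat oppr_eq0 eqz_nat gtn_eqF // abszN /=.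
rewrite /Sprod -(big_rev_conj_trmx _ _ JJt JtJ).
by apply: eq_big_seq => i _; rewrite Sz_neg.
Qed.

Lemma prod_absmx_Sz_pos mu N j :
  \prod_(i <- iota 1 j) absmx (Sz mu N i%:Z) = absSprod mu j.
Proof.
by apply: eq_big_seq => i; rewrite mem_iota => /andP[i_gt0 _]; rewrite Sz_pos.
Qed.

Lemma prod_absmx_Sz_neg mu N j :
  \prod_(i <- rev (iota 1 j)) absmx (Sz mu N (- i%:Z)) =
  absmx J *m (absSprod (mu \o neg_index N) j)^T *m (absmx J)^T.
Proof.
have [EEt EtE] := absJ_orthogonal.
rewrite /absSprod -(big_rev_conj_trmx _ _ EEt EtE).
by apply: eq_big_seq => i _; rewrite Sz_neg absmx_conjJ.
Qed.

Lemma Lz_ratio_bound mu N K j : (0 < N)%N -> ~~ odd N -> alternating mu ->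
  (forall k, (0 < k)%N -> 1 <= `|mu k| < K) -> 2 <= `|j| ->
  1 <= mx_ratio (Lz mu N j) <= (K ^+ 2)%:~R.
Proof.
move=> N_gt0 N_even mu_alt mu_bound.
case: j => n; rewrite ?NegzE ?normrN => n_ge2.
  have [m ->] : exists m, n = m.+2 by case: n n_ge2 => [|[|m]] // _; exists m.
  rewrite Lz_pos // -mx_ratio_absmx absmx_Sprod //.
  exact/growth_bounded_ratio/growth_bounded_absSprod.
have [m ->] : exists m, n = m.+1 by case: n n_ge2 => [|m] // _; exists m.
rewrite Lz_neg // mx_ratio_conjJ -mx_ratio_absmx absmx_Sprod; last first.
  exact: alternating_neg_index.
apply/growth_bounded_ratio/growth_bounded_absSprod => k k_gt0 /=.
by apply: mu_bound; have [] := neg_index_spec k N_gt0 N_even.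
Qed.
Theorem lemma5p2 (D : nat) (Q : nat -> 'M[int]_2) (mu : nat -> int) (N : nat) :
  (0 < D)%N ->
  (forall m : nat, (m ^ 2)%N != D) ->
  principal_cycle D Q mu ->
  least_period Q N ->
  (* (i) sign patterns *)
  (forall j : nat, (0 < j)%N ->
     let L := Lz mu N j%:Z in
     ((j %% 4 = 0)%N ->
        0 <= L 0 0 /\ 0 <= L 0 1 /\ 0 <= L 1 0 /\ 0 <= L 1 1) /\
     ((j %% 4 = 1)%N ->
        L 0 0 <= 0 /\ 0 <= L 0 1 /\ L 1 0 <= 0 /\ 0 <= L 1 1) /\
     ((j %% 4 = 2)%N ->
        L 0 0 <= 0 /\ L 0 1 <= 0 /\ L 1 0 <= 0 /\ L 1 1 <= 0) /\
     ((j %% 4 = 3)%N ->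
        0 <= L 0 0 /\ L 0 1 <= 0 /\ 0 <= L 1 0 /\ L 1 1 <= 0)) /\
  (* (ii) *)
  (forall j : nat, (0 < j)%N ->
     absmx (Lz mu N j%:Z) = \prod_(i <- iota 1 j) absmx (Sz mu N i%:Z) /\
     absmx (Lz mu N (- j%:Z)) =
       \prod_(i <- rev (iota 1 j)) absmx (Sz mu N (- i%:Z))) /\
  (* (iii) *)
  (forall j : int, 2 <= `|j| ->
     let L := Lz mu N j in
     let ratio : Rdefinitions.R := (maxabs L)%:~R / (minabs L)%:~R in
     1 <= ratio /\ ratio <= 4 * (D%:R + sqrtD D)).
Proof.
move=> D_gt0 D_nsq Q_mu Q_per; have [N_gt0 _] := Q_per.
have N_even := least_period_even D_gt0 D_nsq Q_mu Q_per.
have mu_alt := principal_mu_alternating D_gt0 D_nsq Q_mu.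
split; [|split].
- by move=> j j_gt0; rewrite Lz_pos //; apply: Sprod_sign_pattern.
- move=> j j_gt0; rewrite Lz_pos // Lz_neg // absmx_conjJ !absmx_Sprod //.
    by rewrite prod_absmx_Sz_pos prod_absmx_Sz_neg.
  exact: alternating_neg_index.
- move=> j j_ge2.
  have mu_bound k : (0 < k)%N -> 1 <= `|mu k| < 2 * lam D + 1.
    by move=> /(principal_mu_bound D_gt0 D_nsq Q_mu); lia.
  have /andP[ratio_ge1 ratio_le] := Lz_ratio_bound N_gt0 N_even mu_alt mu_bound j_ge2.
  by split => //; apply: le_trans ratio_le (sqr_2lam1_le D_nsq).
Qed.
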